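(* For every $\widehat r\in\mathbb{N}$ and every $m\ge1$, \[\mathrm{Var}(\mu^{(b^m\widehat r+b^m-1)})=\frac1{b^m}\mathrm{Var}(\mu^{(\widehat r)})+\Big(1-\frac1{b^m}\Big)\mathrm{Var}(\mu^{(\widehat r+1)})+b-\frac1{b^{m-1}}.\]
   Context: Fix an integer $b\ge2$. For $n\in\mathbb{N}$ with base-$b$ digits $n_k$, $s(n):=\sum_kn_k$. For $r,n\in\mathbb{N}$, $\Delta^{(r)}(n):=s(n+r)-s(n)$, and $\mu^{(r)}(d):=\lim_{N\to\infty}\frac1N|\{n<N:\Delta^{(r)}(n)=d\}|$ for $d\in\mathbb{Z}$; these limits exist and $\mu^{(r)}$ is a probability measure on $\mathbb{Z}$ with finite moments. $\mathrm{Var}(\mu^{(r)})$ is its variance. *)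

From Stdlib Require Import Reals Lra Lia ZArith Arith List.
From Coquelicot Require Import Coquelicot.
Open Scope R_scope.

(* base-b digit sum: s(n) = sum_k n_k with n_k = (n / b^k) mod b.
   For b >= 2 all digits of index k > n vanish, so summing k = 0..n suffices. *)
Definition digsum (b n : nat) : nat :=
  fold_right Nat.add 0%nat (map (fun k => ((n / b ^ k) mod b)%nat) (seq 0 (S n))).

Definition Delta (b r n : nat) : Z :=
  (Z.of_nat (digsum b (n + r)) - Z.of_nat (digsum b n))%Z.

Definition cnt (b r : nat) (d : Z) (N : nat) : nat :=
  length (filter (fun n => Z.eqb (Delta b r n) d) (seq 0 N)).

Definition mu (b r : nat) (d : Z) : R :=
  real (Lim_seq (fun N => INR (cnt b r d N) / INR N)).

Definition zsum (f : Z -> R) : R :=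
  Series (fun j => f (Z.of_nat j)) + Series (fun j => f (- Z.of_nat (S j))%Z).

Definition Var_mu (b r : nat) : R :=
  zsum (fun d => IZR d ^ 2 * mu b r d) - (zsum (fun d => IZR d * mu b r d)) ^ 2.

(** Write [n = b^K q + u] with [u < b^K].  Adding [r = b^K r1 + r0] to [n] gives the exact
    identity [Delta^(r)(n) = Delta^(r1 + c)(q) + s((u + r0) mod b^K) - s(u)], where [c] is the carry
    [(u + r0) / b^K] out of the [K] lowest digits.  Hence [mu^(r)] is the uniform average over
    [u < b^K] of the laws [mu^(r1 + c)] translated by [s((u + r0) mod b^K) - s(u)].

    With [K = m], [r1 = rh], [r0 = b^m - 1] the components are [mu^(rh)] (for [u = 0]) and
    [mu^(rh+1)] (for [u <> 0]), and the translation is the digit-sum change under the cyclic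
    predecessor [u -> u - 1 mod b^m].  All [mu^(t)] have mass 1 and mean 0 (the translations average
    to 0 since [u -> u + r0 mod b^K] permutes the residues), so the variance of the mixture is the
    average of the variances plus the mean square of the translations, and splitting off the lowest
    digit shows that the squared translations sum to [b^(m+1) - b].

    Taking [K = t], [r1 = 0] and [r0 = t < b^t], the carry is 0 or 1, so every [mu^(t)] is such an average of
    translates of [mu^(0)] (a Dirac mass) and [mu^(1)].  The limits defining [mu^(1)] exist by
    induction on [1 - d], and its left tail decays geometrically; hence all [mu^(t)] exist and have
    finite moments. *)

From Stdlib Require Import Reals Lra Lia ZArith Arith List.
From Coquelicot Require Import Coquelicot.
(* Imported last: [Reals] also exports a constant named [Delta]. *)

Open Scope R_scope.

(** * Finite sums *)

Fixpoint rsum (f : nat -> R) (n : nat) : R :=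
  match n with O => 0 | S k => rsum f k + f k end.

Lemma rsum_ext f g n : (forall i, (i < n)%nat -> f i = g i) -> rsum f n = rsum g n.
Proof.
  induction n as [|n IH]; intros H; simpl; [reflexivity|].
  rewrite IH, H; [reflexivity | lia | intros; apply H; lia].
Qed.

Lemma rsum_plus f g n : rsum (fun i => f i + g i) n = rsum f n + rsum g n.
Proof. induction n as [|n IH]; simpl; [lra|]. rewrite IH; ring. Qed.

Lemma rsum_scal_l c f n : rsum (fun i => c * f i) n = c * rsum f n.
Proof. induction n as [|n IH]; simpl; [ring|]. rewrite IH; ring. Qed.

Lemma rsum_const c n : rsum (fun _ => c) n = INR n * c.
Proof. induction n as [|n IH]; simpl rsum; [simpl; ring|]. rewrite IH, S_INR; ring. Qed.

Lemma rsum_first f n : (0 < n)%nat -> rsum f n = f 0%nat + rsum (fun i => f (S i)) (n - 1).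
Proof.
  intros Hn. destruct n as [|n]; [lia|]. rewrite Nat.sub_succ, Nat.sub_0_r.
  induction n as [|n IH]; simpl rsum in *; [ring|]. rewrite IH by lia; ring.
Qed.

Lemma rsum_pred_last f n : (0 < n)%nat -> rsum f n = rsum f (n - 1) + f (n - 1)%nat.
Proof. intros Hn. destruct n; [lia|]. simpl. now rewrite Nat.sub_0_r. Qed.

Lemma rsum_add f a k : rsum f (a + k) = rsum f a + rsum (fun i => f (a + i)%nat) k.
Proof.
  induction k as [|k IH]; simpl; [rewrite Nat.add_0_r; ring|].
  rewrite Nat.add_succ_r; simpl. rewrite IH; ring.
Qed.

Lemma rsum_mul f B k :
  rsum f (B * k) = rsum (fun w => rsum (fun v => f (B * w + v)%nat) B) k.
Proof.
  induction k as [|k IH]; [now rewrite Nat.mul_0_r|].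
  rewrite Nat.mul_succ_r, rsum_add, IH; reflexivity.
Qed.

Lemma rsum_comm (F : nat -> nat -> R) M B :
  rsum (fun w => rsum (F w) B) M = rsum (fun u => rsum (fun w => F w u) M) B.
Proof.
  induction M as [|M IH]; simpl.
  - rewrite rsum_const; simpl; ring.
  - rewrite IH, <- rsum_plus; reflexivity.
Qed.

Lemma rsum_rotate1 f B : (0 < B)%nat -> rsum (fun u => f ((u + 1) mod B)%nat) B = rsum f B.
Proof.
  intros HB. destruct B as [|n]; [lia|].
  rewrite (rsum_first f (S n)), Nat.sub_succ, Nat.sub_0_r by lia; cbn [rsum].
  replace ((n + 1) mod S n)%nat with 0%nat by (rewrite Nat.add_1_r, Nat.Div0.mod_same; reflexivity).
  rewrite (rsum_ext _ (fun i => f (S i))); [ring|].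
  intros i Hi. rewrite Nat.mod_small by lia. f_equal; lia.
Qed.

Lemma rsum_rotate f B r : (0 < B)%nat -> rsum (fun u => f ((u + r) mod B)%nat) B = rsum f B.
Proof.
  intros HB. induction r as [|r IH].
  - apply rsum_ext; intros i Hi. rewrite Nat.add_0_r, Nat.mod_small by lia; reflexivity.
  - rewrite <- IH, <- (rsum_rotate1 (fun v => f ((v + r) mod B)%nat) B HB).
    apply rsum_ext; intros i _. rewrite Nat.Div0.add_mod_idemp_l. f_equal. f_equal. lia.
Qed.

(** * Natural densities *)

Lemma is_lim_seq_rsum (F : nat -> nat -> R) (l : nat -> R) B :
  (forall u, (u < B)%nat -> is_lim_seq (F u) (l u)) ->
  is_lim_seq (fun N => rsum (fun u => F u N) B) (rsum l B).
Proof.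
  induction B as [|B IH]; intros H; simpl.
  - apply is_lim_seq_const.
  - apply is_lim_seq_plus'; [apply IH; intros; apply H|apply H]; lia.
Qed.

Lemma is_lim_seq_inv_INR : is_lim_seq (fun n => / INR n) 0.
Proof.
  replace (Finite 0) with (Rbar_inv p_infty) by reflexivity.
  apply is_lim_seq_inv; [apply is_lim_seq_INR | discriminate].
Qed.

Lemma is_lim_seq_div_nat B : (0 < B)%nat -> is_lim_seq (fun N => INR (N / B) / INR N) (/ INR B).
Proof.
  intros HB.
  assert (HB' : 0 < INR B) by (apply lt_0_INR; lia).
  apply is_lim_seq_le_le_loc with (u := fun N => / INR B - / INR N) (w := fun _ => / INR B).
  - exists 1%nat; intros N HN.
    assert (0 < INR N) by (apply lt_0_INR; lia).
    pose proof (Nat.div_mod_eq N B). pose proof (Nat.mod_upper_bound N B ltac:(lia)).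
    assert (INR B * INR (N / B) <= INR N) by (rewrite <- mult_INR; apply le_INR; lia).
    assert (INR N <= INR B * INR (N / B) + INR B)
      by (rewrite <- mult_INR, <- plus_INR; apply le_INR; lia).
    split.
    + apply Rmult_le_reg_l with (INR B * INR N); [nra|].
      field_simplify; [nra | lra | lra].
    + apply Rmult_le_reg_l with (INR B * INR N); [nra|].
      field_simplify; [nra | lra | lra].
  - pose proof (is_lim_seq_minus' _ _ _ _ (is_lim_seq_const (/ INR B)) is_lim_seq_inv_INR) as H.
    rewrite Rminus_0_r in H. exact H.
  - apply is_lim_seq_const.
Qed.

Lemma filterlim_div_nat B : (0 < B)%nat -> filterlim (fun N => (N / B)%nat) eventually eventually.
Proof.
  intros HB P [N0 HP]. exists (N0 * B)%nat. intros n Hn. apply HP.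
  apply Nat.div_le_lower_bound; lia.
Qed.

Definition count (f : nat -> bool) (N : nat) : nat := length (filter f (seq 0 N)).

Definition has_density (f : nat -> bool) (l : R) : Prop :=
  is_lim_seq (fun N => INR (count f N) / INR N) l.

Lemma INR_count f N : INR (count f N) = rsum (fun n => if f n then 1 else 0) N.
Proof.
  induction N as [|N IH]; [reflexivity|].
  unfold count in *. rewrite seq_S, filter_app, length_app, plus_INR, IH; simpl.
  destruct (f N); simpl; ring.
Qed.

Lemma has_density_ext f g l : (forall n, f n = g n) -> has_density f l -> has_density g l.
Proof.
  intros H. unfold has_density, count.
  apply is_lim_seq_ext; intros N. now rewrite (filter_ext _ _ H).
Qed.

Lemma count_le f N : (count f N <= N)%nat.
Proof. unfold count. rewrite <- (length_seq N 0) at 2. apply filter_length_le. Qed.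

Lemma count_add_bounds f a k : (count f a <= count f (a + k) <= count f a + k)%nat.
Proof.
  unfold count. rewrite seq_app, filter_app, length_app.
  pose proof (filter_length_le f (seq (0 + a) k)). rewrite length_seq in H. lia.
Qed.

Lemma count_blocks (f : nat -> bool) (g : nat -> nat -> bool) B M :
  (forall q u, (u < B)%nat -> f (B * q + u)%nat = g u q) ->
  INR (count f (B * M)) = rsum (fun u => INR (count (g u) M)) B.
Proof.
  intros Hfg. rewrite INR_count, rsum_mul, rsum_comm.
  apply rsum_ext; intros u Hu. rewrite INR_count.
  apply rsum_ext; intros q _. now rewrite Hfg.
Qed.

Lemma has_density_blocks (f : nat -> bool) (g : nat -> nat -> bool) B (l : nat -> R) :
  (0 < B)%nat ->
  (forall q u, (u < B)%nat -> f (B * q + u)%nat = g u q) ->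
  (forall u, (u < B)%nat -> has_density (g u) (l u)) ->
  has_density f (/ INR B * rsum l B).
Proof.
  intros HB Hfg Hg.
  set (y := fun N => INR (count f (B * (N / B))) / INR N).
  assert (Hy : is_lim_seq y (rsum l B * / INR B)).
  { apply is_lim_seq_ext_loc with
      (u := fun N => rsum (fun u => INR (count (g u) (N / B)) / INR (N / B)) B
                     * (INR (N / B) / INR N)).
    - exists B; intros N HN.
      assert (0 < INR (N / B)) by (apply lt_0_INR, Nat.div_str_pos; lia).
      unfold y, Rdiv. rewrite (count_blocks f g B _ Hfg).
      rewrite (Rmult_comm (rsum _ B)), <- rsum_scal_l, (Rmult_comm (rsum _ B)), <- rsum_scal_l.
      apply rsum_ext; intros u _. field.
      split; [apply not_0_INR; lia | lra].
    - apply is_lim_seq_mult'; [|apply is_lim_seq_div_nat; exact HB].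
      apply is_lim_seq_rsum; intros u Hu.
      apply (is_lim_seq_subseq (fun N => INR (count (g u) N) / INR N));
        [apply filterlim_div_nat; exact HB | apply Hg; exact Hu]. }
  rewrite Rmult_comm.
  apply is_lim_seq_le_le_loc with (u := y) (w := fun N => y N + INR B * / INR N); [|exact Hy|].
  - exists 1%nat; intros N HN.
    assert (0 < / INR N) by (apply Rinv_0_lt_compat, lt_0_INR; lia).
    pose proof (Nat.div_mod_eq N B). pose proof (Nat.mod_upper_bound N B ltac:(lia)).
    destruct (count_add_bounds f (B * (N / B)) (N mod B)) as [C1 C2].
    replace (B * (N / B) + N mod B)%nat with N in C1, C2 by lia.
    apply le_INR in C1. apply le_INR in C2. rewrite plus_INR in C2.
    assert (INR (N mod B) <= INR B) by (apply le_INR; lia).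
    unfold y, Rdiv. split; [|rewrite <- Rmult_plus_distr_r]; apply Rmult_le_compat_r; lra.
  - pose proof (is_lim_seq_plus' _ _ _ _ Hy
      (is_lim_seq_mult' _ _ _ _ (is_lim_seq_const (INR B)) is_lim_seq_inv_INR)) as H.
    rewrite Rmult_0_r, Rplus_0_r in H. exact H.
Qed.

Lemma has_density_const (c : bool) : has_density (fun _ => c) (if c then 1 else 0).
Proof.
  assert (Hc : forall N, count (fun _ => c) N = if c then N else 0%nat).
  { intros N. induction N as [|N IH]; [destruct c; reflexivity|].
    unfold count in *. rewrite seq_S, filter_app, length_app, IH. destruct c; simpl; lia. }
  unfold has_density. destruct c.
  - apply is_lim_seq_ext_loc with (u := fun _ => 1); [|apply is_lim_seq_const].
    exists 1%nat; intros N HN. rewrite Hc. field. apply not_0_INR; lia.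
  - apply is_lim_seq_ext with (u := fun _ => 0); [|apply is_lim_seq_const].
    intros N. rewrite Hc. simpl. unfold Rdiv; ring.
Qed.

Lemma has_density_bounds f l : has_density f l -> 0 <= l <= 1.
Proof.
  intros H.
  assert (Hb : forall N, 0 <= INR (count f N) / INR N <= 1).
  { intros [|N]; [simpl; unfold Rdiv; rewrite Rinv_0, Rmult_0_r; lra|].
    assert (0 < INR (S N)) by (apply lt_0_INR; lia).
    pose proof (pos_INR (count f (S N))). pose proof (le_INR _ _ (count_le f (S N))).
    split; [apply Rdiv_le_0_compat; lra|].
    apply Rmult_le_reg_r with (INR (S N)); [lra|]. unfold Rdiv.
    rewrite Rmult_assoc, Rinv_l; lra. }
  split.
  - apply (is_lim_seq_le (fun _ => 0) _ 0 l (fun N => proj1 (Hb N)) (is_lim_seq_const 0) H).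
  - apply (is_lim_seq_le _ (fun _ => 1) l 1 (fun N => proj2 (Hb N)) H (is_lim_seq_const 1)).
Qed.

Definition has_distribution (F : nat -> Z) (p : Z -> R) : Prop :=
  forall d, has_density (fun n => Z.eqb (F n) d) (p d).

Definition mixture (P : nat -> Z -> R) (c : nat -> Z) (B : nat) (d : Z) : R :=
  / INR B * rsum (fun u => P u (d - c u)%Z) B.

Definition dirac0 (d : Z) : R := if Z.eqb 0 d then 1 else 0.

Lemma has_distribution_const0 : has_distribution (fun _ => 0%Z) dirac0.
Proof. intros d. apply has_density_const. Qed.

Lemma has_distribution_blocks (F : nat -> Z) (G : nat -> nat -> Z) (c : nat -> Z)
    (P : nat -> Z -> R) B :
  (0 < B)%nat ->
  (forall q u, (u < B)%nat -> F (B * q + u)%nat = (G u q + c u)%Z) ->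
  (forall u, (u < B)%nat -> has_distribution (G u) (P u)) ->
  has_distribution F (mixture P c B).
Proof.
  intros HB HF HG d.
  apply (has_density_blocks _ (fun u q => Z.eqb (G u q) (d - c u)) B (fun u => P u (d - c u)%Z) HB).
  - intros q u Hu. rewrite HF by exact Hu.
    destruct (Z.eqb_spec (G u q + c u) d), (Z.eqb_spec (G u q) (d - c u)); auto; lia.
  - intros u Hu. apply HG, Hu.
Qed.

(** * Series over Z and moments *)

Definition zsummable (f : Z -> R) : Prop :=
  ex_series (fun j => f (Z.of_nat j)) /\ ex_series (fun j => f (- Z.of_nat (S j))%Z).

Lemma zsummable_ext f g : (forall d, f d = g d) -> zsummable f -> zsummable g.
Proof. intros H [Hp Hn]; split; [revert Hp|revert Hn]; apply ex_series_ext; auto. Qed.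

Lemma zsum_ext f g : (forall d, f d = g d) -> zsum f = zsum g.
Proof. intros H; unfold zsum; f_equal; apply Series_ext; auto. Qed.

Lemma zsummable_plus f g : zsummable f -> zsummable g -> zsummable (fun d => f d + g d).
Proof.
  intros [Hf1 Hf2] [Hg1 Hg2].
  split; [exact (ex_series_plus _ _ Hf1 Hg1)|exact (ex_series_plus _ _ Hf2 Hg2)].
Qed.

Lemma zsum_plus f g : zsummable f -> zsummable g -> zsum (fun d => f d + g d) = zsum f + zsum g.
Proof. intros [Hf1 Hf2] [Hg1 Hg2]; unfold zsum. rewrite !Series_plus by assumption; ring. Qed.

Lemma zsummable_scal k f : zsummable f -> zsummable (fun d => k * f d).
Proof.
  intros [Hf1 Hf2]. split; [exact (ex_series_scal_l k _ Hf1)|exact (ex_series_scal_l k _ Hf2)].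
Qed.

Lemma zsum_scal k f : zsum (fun d => k * f d) = k * zsum f.
Proof. unfold zsum. rewrite !Series_scal_l; ring. Qed.

Lemma ex_series_0 : ex_series (fun _ : nat => 0).
Proof.
  apply (ex_series_ext (fun n => 0 * (/ 2) ^ n) (fun _ => 0)); [intros; apply Rmult_0_l|].
  exact (ex_series_scal_l 0 _ (ex_series_geom (/ 2) ltac:(rewrite Rabs_pos_eq; lra))).
Qed.

Lemma zsummable_rsum (F : nat -> Z -> R) n :
  (forall u, (u < n)%nat -> zsummable (F u)) -> zsummable (fun d => rsum (fun u => F u d) n).
Proof.
  induction n as [|n IH]; intros H; simpl.
  - split; exact ex_series_0.
  - apply zsummable_plus; [apply IH; intros; apply H|apply H]; lia.
Qed.

Lemma zsum_rsum (F : nat -> Z -> R) n :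
  (forall u, (u < n)%nat -> zsummable (F u)) ->
  zsum (fun d => rsum (fun u => F u d) n) = rsum (fun u => zsum (F u)) n.
Proof.
  induction n as [|n IH]; intros H; simpl.
  - rewrite (zsum_ext _ (fun d => 0 * 0)), zsum_scal by (intros; ring); ring.
  - rewrite zsum_plus, IH; [reflexivity| |apply zsummable_rsum|]; intros; apply H; lia.
Qed.

Lemma zsummable_succ f : zsummable (fun d => f (d + 1)%Z) <-> zsummable f.
Proof.
  unfold zsummable.
  rewrite (ex_series_incr_1 (fun j => f (Z.of_nat j))),
    (ex_series_incr_1 (fun j => f (- Z.of_nat (S j) + 1)%Z)).
  split; intros [Hp Hn]; split; [revert Hp|revert Hn|revert Hp|revert Hn];
    apply ex_series_ext; intros j; f_equal; lia.
Qed.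

Lemma zsum_succ f : zsummable f -> zsum (fun d => f (d + 1)%Z) = zsum f.
Proof.
  intros Hf. pose proof (proj2 (zsummable_succ f) Hf) as [Hp Hn]. unfold zsum.
  rewrite (Series_incr_1 (fun j => f (- Z.of_nat (S j) + 1)%Z)),
    (Series_incr_1 (fun j => f (Z.of_nat j)))
    by (apply Hf || exact Hn).
  rewrite (Series_ext (fun j => f (Z.of_nat j + 1)%Z) (fun k => f (Z.of_nat (S k))))
    by (intros; f_equal; lia).
  rewrite (Series_ext (fun k => f (- Z.of_nat (S (S k)) + 1)%Z) (fun j => f (- Z.of_nat (S j))%Z))
    by (intros; f_equal; lia).
  simpl. ring.
Qed.

Lemma zsum_shift c : forall f, zsummable f ->
  zsummable (fun d => f (d - c)%Z) /\ zsum (fun d => f (d - c)%Z) = zsum f.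
Proof.
  induction c as [|c IH|c IH] using Z.peano_ind; intros f Hf.
  - split; [revert Hf; apply zsummable_ext|apply zsum_ext]; intros d; f_equal; lia.
  - set (g := fun e => f (e - 1)%Z).
    assert (Hg : zsummable g).
    { apply zsummable_succ. revert Hf; apply zsummable_ext; intros d; unfold g; f_equal; lia. }
    destruct (IH g Hg) as [Hs Heq]. split.
    + revert Hs; apply zsummable_ext; intros d; unfold g; f_equal; lia.
    + rewrite (zsum_ext _ (fun d => g (d - c)%Z)) by (intros d; unfold g; f_equal; lia).
      rewrite Heq, <- (zsum_succ g Hg). apply zsum_ext; intros d; unfold g; f_equal; lia.
  - set (g := fun e => f (e + 1)%Z).
    assert (Hg : zsummable g) by (apply zsummable_succ, Hf).
    destruct (IH g Hg) as [Hs Heq]. split.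
    + revert Hs; apply zsummable_ext; intros d; unfold g; f_equal; lia.
    + rewrite (zsum_ext _ (fun d => g (d - c)%Z)) by (intros d; unfold g; f_equal; lia).
      rewrite Heq. apply zsum_succ, Hf.
Qed.

Definition mass (p : Z -> R) : R := zsum p.
Definition mean (p : Z -> R) : R := zsum (fun d => IZR d * p d).
Definition moment2 (p : Z -> R) : R := zsum (fun d => IZR d ^ 2 * p d).

Definition finite_moments (p : Z -> R) : Prop :=
  zsummable p /\ zsummable (fun d => IZR d * p d) /\ zsummable (fun d => IZR d ^ 2 * p d).

Lemma finite_moments_ext p q : (forall d, p d = q d) -> finite_moments p -> finite_moments q.
Proof.
  intros H (H0 & H1 & H2).
  split; [|split]; [revert H0|revert H1|revert H2]; apply zsummable_ext; intros d; now rewrite H.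
Qed.

Section Shift.

Variables (p : Z -> R) (c : Z).
Hypothesis Hp : finite_moments p.

Let h1 (e : Z) : R := IZR e * p e + IZR c * p e.
Let h2 (e : Z) : R := IZR e ^ 2 * p e + 2 * IZR c * (IZR e * p e) + IZR c ^ 2 * p e.

Let h1_summable : zsummable h1.
Proof. destruct Hp as (H0 & H1 & _). apply zsummable_plus, zsummable_scal; assumption. Qed.

Let h2_summable : zsummable h2.
Proof.
  destruct Hp as (H0 & H1 & H2).
  apply zsummable_plus; [apply zsummable_plus|]; try apply zsummable_scal; assumption.
Qed.

Let h1_shift d : IZR d * p (d - c)%Z = h1 (d - c)%Z.
Proof. unfold h1. rewrite minus_IZR; ring. Qed.

Let h2_shift d : IZR d ^ 2 * p (d - c)%Z = h2 (d - c)%Z.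
Proof. unfold h2. rewrite minus_IZR; ring. Qed.

Lemma finite_moments_shift : finite_moments (fun d => p (d - c)%Z).
Proof.
  split; [|split].
  - apply zsum_shift, Hp.
  - apply (zsummable_ext (fun d => h1 (d - c)%Z)); [intros; symmetry; apply h1_shift|].
    apply zsum_shift, h1_summable.
  - apply (zsummable_ext (fun d => h2 (d - c)%Z)); [intros; symmetry; apply h2_shift|].
    apply zsum_shift, h2_summable.
Qed.

Lemma mass_shift : mass (fun d => p (d - c)%Z) = mass p.
Proof. apply zsum_shift, Hp. Qed.

Lemma mean_shift : mean (fun d => p (d - c)%Z) = mean p + IZR c * mass p.
Proof.
  destruct Hp as (H0 & H1 & _).
  unfold mean. rewrite (zsum_ext _ (fun d => h1 (d - c)%Z)) by apply h1_shift.
  rewrite (proj2 (zsum_shift c h1 h1_summable)). unfold h1.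
  rewrite zsum_plus, zsum_scal by (try apply zsummable_scal; assumption). reflexivity.
Qed.

Lemma moment2_shift :
  moment2 (fun d => p (d - c)%Z) = moment2 p + 2 * IZR c * mean p + IZR c ^ 2 * mass p.
Proof.
  destruct Hp as (H0 & H1 & H2).
  unfold moment2. rewrite (zsum_ext _ (fun d => h2 (d - c)%Z)) by apply h2_shift.
  rewrite (proj2 (zsum_shift c h2 h2_summable)). unfold h2.
  rewrite !zsum_plus, !zsum_scal;
    try apply zsummable_plus; try apply zsummable_scal; try assumption. reflexivity.
Qed.

End Shift.

Section Mixture.

Variables (P : nat -> Z -> R) (c : nat -> Z) (B : nat).
Hypothesis HP : forall u, (u < B)%nat -> finite_moments (P u).

Let zsum_mixture (w : Z -> R) :
  (forall u, (u < B)%nat -> zsummable (fun d => w d * P u (d - c u)%Z)) ->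
  zsummable (fun d => w d * mixture P c B d) /\
  zsum (fun d => w d * mixture P c B d)
  = / INR B * rsum (fun u => zsum (fun d => w d * P u (d - c u)%Z)) B.
Proof.
  intros Hw.
  assert (E : forall d, w d * mixture P c B d
                        = / INR B * rsum (fun u => w d * P u (d - c u)%Z) B).
  { intros d. unfold mixture. rewrite rsum_scal_l; ring. }
  split.
  - apply (zsummable_ext _ _ (fun d => eq_sym (E d))), zsummable_scal, zsummable_rsum, Hw.
  - rewrite (zsum_ext _ _ E), zsum_scal, zsum_rsum by exact Hw. reflexivity.
Qed.

Let shifted u : (u < B)%nat -> finite_moments (fun d => P u (d - c u)%Z).
Proof. intros Hu. apply finite_moments_shift, HP, Hu. Qed.

Let mixture_1 :
  zsummable (fun d => 1 * mixture P c B d) /\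
  zsum (fun d => 1 * mixture P c B d)
  = / INR B * rsum (fun u => zsum (fun d => 1 * P u (d - c u)%Z)) B.
Proof.
  apply zsum_mixture; intros u Hu.
  apply (zsummable_ext (fun d => P u (d - c u)%Z)); [intros; ring|apply shifted, Hu].
Qed.

Lemma finite_moments_mixture : finite_moments (mixture P c B).
Proof.
  split; [|split].
  - apply (zsummable_ext _ _ (fun d => Rmult_1_l _)), mixture_1.
  - apply zsum_mixture; intros u Hu; apply shifted, Hu.
  - apply zsum_mixture; intros u Hu; apply shifted, Hu.
Qed.

Lemma mass_mixture : mass (mixture P c B) = / INR B * rsum (fun u => mass (P u)) B.
Proof.
  unfold mass. rewrite (zsum_ext _ _ (fun d => eq_sym (Rmult_1_l _))), (proj2 mixture_1).
  f_equal; apply rsum_ext; intros u Hu.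
  rewrite (zsum_ext _ _ (fun d => Rmult_1_l _)). apply mass_shift, HP, Hu.
Qed.

Lemma mean_mixture :
  mean (mixture P c B) = / INR B * rsum (fun u => mean (P u) + IZR (c u) * mass (P u)) B.
Proof.
  unfold mean at 1. rewrite (proj2 (zsum_mixture _ (fun u Hu => proj1 (proj2 (shifted u Hu))))).
  f_equal; apply rsum_ext; intros u Hu. apply mean_shift, HP, Hu.
Qed.

Lemma moment2_mixture :
  moment2 (mixture P c B)
  = / INR B * rsum (fun u => moment2 (P u) + 2 * IZR (c u) * mean (P u)
                             + IZR (c u) ^ 2 * mass (P u)) B.
Proof.
  unfold moment2 at 1. rewrite (proj2 (zsum_mixture _ (fun u Hu => proj2 (proj2 (shifted u Hu))))).
  f_equal; apply rsum_ext; intros u Hu. apply moment2_shift, HP, Hu.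
Qed.

End Mixture.

Lemma bernoulli_ineq x n : 0 <= x <= 1 -> 1 - INR n * x <= (1 - x) ^ n.
Proof.
  intros Hx. induction n as [|n IH]; [simpl; lra|].
  rewrite S_INR; simpl.
  assert ((1 - x) * (1 - INR n * x) <= (1 - x) * (1 - x) ^ n) by (apply Rmult_le_compat_l; lra).
  pose proof (pos_INR n). nra.
Qed.

Lemma ex_series_square_geom (rho : R) : 0 <= rho < 1 ->
  ex_series (fun j => INR (S j) * INR (S (S j)) * rho ^ j).
Proof.
  intros Hr.
  assert (Hc : CV_radius (fun _ => 1) = 1).
  { rewrite (CV_radius_finite_DAlembert _ 1); [now rewrite Rinv_1| intros; lra | lra|].
    apply is_lim_seq_ext with (u := fun _ => 1); [|apply is_lim_seq_const].
    intros n. now rewrite Rdiv_1_r, Rabs_R1. }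
  assert (H : ex_pseries (PS_derive (PS_derive (fun _ => 1))) rho).
  { apply ex_pseries_derive. rewrite CV_radius_derive, Hc. simpl. rewrite Rabs_pos_eq; lra. }
  apply ex_pseries_R in H. revert H. apply ex_series_ext.
  intros n. unfold PS_derive. now rewrite Rmult_1_r.
Qed.

Lemma finite_moments_geom_tail (p : Z -> R) (rho : R) (n0 : nat) : 0 <= rho < 1 ->
  (forall d, (Z.of_nat n0 <= d)%Z -> p d = 0) ->
  (forall j, 0 <= p (- Z.of_nat j)%Z <= rho ^ j) ->
  finite_moments p.
Proof.
  intros Hr Hpos Hneg.
  assert (Hk : forall k, (k <= 2)%nat -> zsummable (fun d => IZR d ^ k * p d)).
  { intros k Hk. split.
    - apply (ex_series_incr_n _ n0), (ex_series_ext (fun _ => 0)); [|exact ex_series_0].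
      intros j. rewrite Hpos by lia. symmetry; apply Rmult_0_r.
    - refine (@ex_series_le _ R_CompleteNormedModule _ _ _ (ex_series_square_geom rho Hr)).
      intros j. change norm with Rabs.
      destruct (Hneg (S j)) as [H0 H1].
      assert (Hj : 1 <= INR (S j)) by (rewrite S_INR; pose proof (pos_INR j); lra).
      assert (Hx : Rabs (IZR (- Z.of_nat (S j))) = INR (S j))
        by (rewrite opp_IZR, <- INR_IZR_INZ, Rabs_Ropp; apply Rabs_pos_eq, pos_INR).
      assert (Hrj : 0 <= rho ^ j) by (apply pow_le; lra).
      assert (Hpow : INR (S j) ^ k <= INR (S j) ^ 2) by (apply Rle_pow; lia || lra).
      rewrite Rabs_mult, <- RPow_abs, Hx, (Rabs_pos_eq (p _)) by lra.
      rewrite (S_INR (S j)). set (x := INR (S j)) in *.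
      change (rho ^ S j) with (rho * rho ^ j) in H1.
      apply Rle_trans with (x ^ 2 * (rho * rho ^ j)).
      + apply Rmult_le_compat; [apply pow_le; lra | lra | exact Hpow | exact H1].
      + assert (x ^ 2 * rho <= x * (x + 1)) by (simpl; nra). nra. }
  split; [|split].
  - apply (zsummable_ext _ _ (fun d => Rmult_1_l _)), (Hk 0%nat); lia.
  - apply (zsummable_ext _ _ (fun d => f_equal (fun x => x * p d) (pow_1 (IZR d)))).
    apply (Hk 1%nat); lia.
  - apply Hk; lia.
Qed.

Lemma finite_moments_dirac0 : finite_moments dirac0.
Proof.
  apply (finite_moments_geom_tail _ 0 1); [lra| |].
  - intros d Hd. unfold dirac0. destruct (Z.eqb_spec 0 d); [lia|reflexivity].
  - intros [|j]; unfold dirac0; [simpl; lra|].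
    destruct (Z.eqb_spec 0 (- Z.of_nat (S j))); [lia|]. simpl; lra.
Qed.

Lemma mass_dirac0 : mass dirac0 = 1.
Proof.
  destruct finite_moments_dirac0 as [[Hp _] _].
  unfold mass, zsum. rewrite (Series_incr_1 _ Hp).
  rewrite (Series_ext (fun k => dirac0 (Z.of_nat (S k))) (fun _ => 0 * 0)),
    (Series_ext (fun j => dirac0 (- Z.of_nat (S j))%Z) (fun _ => 0 * 0)), !Series_scal_l
    by (intros; unfold dirac0; rewrite (proj2 (Z.eqb_neq _ _)) by lia; ring).
  unfold dirac0; simpl; ring.
Qed.

Lemma mean_dirac0 : mean dirac0 = 0.
Proof.
  unfold mean. rewrite (zsum_ext _ (fun _ => 0 * 0)), zsum_scal by
    (intros d; unfold dirac0; destruct (Z.eqb_spec 0 d); [subst; simpl|]; ring).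
  ring.
Qed.

(** * Digit sums and the laws mu^(r) *)

Fixpoint digsum_trunc (b K n : nat) : nat :=
  match K with
  | O => O
  | S K => (n mod b + digsum_trunc b K (n / b))%nat
  end.

Lemma digsum_trunc_seq b K s n :
  fold_right Nat.add 0%nat (map (fun k => ((n / b ^ k) mod b)%nat) (seq s K))
  = digsum_trunc b K (n / b ^ s).
Proof.
  revert s; induction K as [|K IH]; intros s; simpl; [reflexivity|].
  rewrite IH, Nat.Div0.div_div, (Nat.mul_comm (b ^ s)); reflexivity.
Qed.

Lemma digsum_trunc_0 b K : digsum_trunc b K 0 = 0%nat.
Proof.
  induction K as [|K IH]; simpl; [reflexivity|].
  now rewrite Nat.Div0.mod_0_l, Nat.Div0.div_0_l, IH.
Qed.

Lemma digsum_trunc_add b K j n :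
  (n < b ^ K)%nat -> digsum_trunc b (K + j) n = digsum_trunc b K n.
Proof.
  revert n; induction K as [|K IH]; intros n Hn; simpl in *.
  - replace n with 0%nat by lia. now rewrite !digsum_trunc_0.
  - rewrite IH; [reflexivity|]. apply Nat.Div0.div_lt_upper_bound; lia.
Qed.

Section FixedBase.

Local Open Scope nat_scope.

Variable b : nat.
Hypothesis hb : 2 <= b.

Lemma digsum_trunc_eq K n : n < b ^ K -> digsum b n = digsum_trunc b K n.
Proof.
  intros Hn.
  assert (Hn' : n < b ^ S n) by (pose proof (Nat.pow_gt_lin_r b (S n)); lia).
  unfold digsum; rewrite digsum_trunc_seq, Nat.pow_0_r, Nat.div_1_r.
  rewrite <- (digsum_trunc_add b (S n) K n Hn'), <- (digsum_trunc_add b K (S n) n Hn).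
  f_equal; lia.
Qed.

Lemma digsum_mul_add q u : u < b -> digsum b (b * q + u) = digsum b q + u.
Proof.
  intros Hu.
  assert (Hq : q < b ^ q) by (apply Nat.pow_gt_lin_r; lia).
  rewrite (digsum_trunc_eq q q Hq), (digsum_trunc_eq (S q)) by (simpl; nia); simpl.
  rewrite <- (Nat.div_unique (b * q + u) b q u), <- (Nat.mod_unique (b * q + u) b q u) by lia.
  lia.
Qed.

Lemma digsum_0 : digsum b 0 = 0.
Proof. unfold digsum; simpl; now rewrite Nat.Div0.mod_0_l. Qed.

Lemma digsum_lt u : u < b -> digsum b u = u.
Proof.
  intros Hu. rewrite <- (Nat.add_0_l u) at 1. rewrite <- (Nat.mul_0_r b).
  now rewrite digsum_mul_add, digsum_0.
Qed.

Lemma digsum_pow_mul_add K q u :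
  u < b ^ K -> digsum b (b ^ K * q + u) = digsum b q + digsum b u.
Proof.
  revert q u; induction K as [|K IH]; intros q u Hu.
  - replace u with 0 by (simpl in Hu; lia).
    now rewrite digsum_0, Nat.pow_0_r, Nat.mul_1_l, !Nat.add_0_r.
  - assert (Hb0 : b <> 0) by lia.
    pose proof (Nat.div_mod u b Hb0) as Hd.
    pose proof (Nat.mod_upper_bound u b Hb0).
    assert (u / b < b ^ K) by (apply Nat.Div0.div_lt_upper_bound; simpl in Hu; lia).
    replace (b ^ S K * q + u) with (b * (b ^ K * q + u / b) + u mod b)
      by (rewrite Hd at 3; simpl; ring).
    rewrite digsum_mul_add, IH by assumption.
    rewrite Hd at 3. rewrite digsum_mul_add by assumption. lia.
Qed.

Lemma digsum_succ_le n : digsum b (n + 1) <= digsum b n + 1.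
Proof.
  induction n as [n IH] using (well_founded_induction lt_wf).
  assert (Hb0 : b <> 0) by lia.
  pose proof (Nat.div_mod n b Hb0) as Hd.
  pose proof (Nat.mod_upper_bound n b Hb0).
  destruct (Nat.lt_ge_cases (n mod b) (b - 1)).
  - rewrite Hd, <- Nat.add_assoc, !digsum_mul_add by lia. lia.
  - replace (n + 1) with (b * (n / b + 1) + 0) by lia.
    rewrite Hd at 2. rewrite !digsum_mul_add by lia.
    assert (IHq := IH (n / b) ltac:(apply Nat.div_lt; lia)). lia.
Qed.

Lemma pow_b_pos K : 0 < b ^ K.
Proof. apply Nat.neq_0_lt_0, Nat.pow_nonzero; lia. Qed.

Lemma lt_pow_b r : r < b ^ r.
Proof. apply Nat.pow_gt_lin_r; lia. Qed.

Lemma carry_cases (P : nat -> Prop) K u r0 :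
  u < b ^ K -> r0 <= b ^ K -> P 0 -> P 1 -> P ((u + r0) / b ^ K).
Proof.
  intros Hu Hr H0 H1.
  assert ((u + r0) / b ^ K < 2) by (apply Nat.Div0.div_lt_upper_bound; lia).
  destruct ((u + r0) / b ^ K) as [|[|c]]; [exact H0|exact H1|lia].
Qed.

Definition Delta_low (B r u : nat) : Z :=
  (Z.of_nat (digsum b ((u + r) mod B)) - Z.of_nat (digsum b u))%Z.

Lemma Delta_pow_mul_add K r1 r0 q u : u < b ^ K ->
  Delta b (b ^ K * r1 + r0) (b ^ K * q + u)
  = (Delta b (r1 + (u + r0) / b ^ K)%nat q + Delta_low (b ^ K) r0 u)%Z.
Proof.
  intros Hu. unfold Delta, Delta_low.
  pose proof (Nat.mod_upper_bound (u + r0) (b ^ K) ltac:(pose proof (pow_b_pos K); lia)).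
  replace (b ^ K * q + u + (b ^ K * r1 + r0))
    with (b ^ K * (q + (r1 + (u + r0) / b ^ K)) + (u + r0) mod b ^ K)
    by (pose proof (Nat.div_mod_eq (u + r0) (b ^ K)); lia).
  rewrite !digsum_pow_mul_add by assumption. lia.
Qed.

Lemma Delta_0 n : Delta b 0 n = 0%Z.
Proof. unfold Delta. rewrite Nat.add_0_r. lia. Qed.

Lemma Delta_1_le n : (Delta b 1 n <= 1)%Z.
Proof. unfold Delta. pose proof (digsum_succ_le n). lia. Qed.

Lemma Delta_low_succ_lt u : u + 1 < b -> Delta_low b 1 u = 1%Z.
Proof.
  intros Hu. unfold Delta_low.
  rewrite Nat.mod_small, !digsum_lt by lia. lia.
Qed.

Lemma Delta_low_succ_pred : Delta_low b 1 (b - 1) = (1 - Z.of_nat b)%Z.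
Proof.
  unfold Delta_low. rewrite Nat.sub_add, Nat.Div0.mod_same, digsum_0, digsum_lt by lia. lia.
Qed.

Lemma Delta_1_mul_add q u : u < b ->
  Delta b 1 (b * q + u) = (Delta b ((u + 1) / b) q + Delta_low b 1 u)%Z.
Proof.
  intros Hu. pose proof (Delta_pow_mul_add 1 0 1 q u) as H.
  rewrite Nat.pow_1_r, Nat.mul_0_r in H. apply H, Hu.
Qed.

Lemma Delta_low_pred_mul K q : q < b ^ K ->
  Delta_low (b ^ S K) (b ^ S K - 1) (b * q)
  = (Delta_low (b ^ K) (b ^ K - 1) q + Z.of_nat (b - 1))%Z.
Proof.
  intros Hq. unfold Delta_low. rewrite Nat.pow_succ_r'.
  pose proof (pow_b_pos K).
  set (a := b * q + (b * b ^ K - 1)).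
  assert (Ha : a = b * (q + (b ^ K - 1)) + (b - 1)) by (unfold a; nia).
  rewrite Nat.Div0.mod_mul_r, Ha.
  rewrite <- (Nat.div_unique _ b (q + (b ^ K - 1)) (b - 1)),
    <- (Nat.mod_unique _ b (q + (b ^ K - 1)) (b - 1))
    by lia.
  rewrite Nat.add_comm, digsum_mul_add by lia.
  rewrite <- (Nat.add_0_r (b * q)), digsum_mul_add by lia. lia.
Qed.

Lemma Delta_low_pred_mul_add K q v : q < b ^ K -> 0 < v < b ->
  Delta_low (b ^ S K) (b ^ S K - 1) (b * q + v) = (-1)%Z.
Proof.
  intros Hq Hv. unfold Delta_low. rewrite Nat.pow_succ_r'.
  replace (b * q + v + (b * b ^ K - 1)) with (b * q + (v - 1) + 1 * (b * b ^ K)) by nia.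
  rewrite Nat.Div0.mod_add, Nat.mod_small by nia.
  rewrite !digsum_mul_add by lia. lia.
Qed.

Local Open Scope R_scope.

Lemma INR_b_ge_2 : 2 <= INR b.
Proof. replace 2 with (INR 2) by (simpl; lra). apply le_INR, hb. Qed.

Lemma inv_b_bounds : 0 < / INR b <= / 2.
Proof.
  pose proof INR_b_ge_2.
  split; [apply Rinv_0_lt_compat|apply Rinv_le_contravar]; lra.
Qed.

Lemma mu_of_density r d l : has_density (fun n => Z.eqb (Delta b r n) d) l -> mu b r d = l.
Proof.
  intros H. unfold has_density, count in H. unfold mu, cnt.
  now rewrite (is_lim_seq_unique _ _ H).
Qed.

Lemma has_distribution_mu r p :
  has_distribution (Delta b r) p -> has_distribution (Delta b r) (mu b r).
Proof. intros H d. rewrite (mu_of_density r d (p d) (H d)). apply H. Qed.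

Lemma has_distribution_Delta_0_dirac0 : has_distribution (Delta b 0) dirac0.
Proof.
  intros d. apply (has_density_ext (fun _ => Z.eqb 0 d)); [|apply has_distribution_const0].
  intros n; now rewrite Delta_0.
Qed.

Lemma has_distribution_Delta_0 : has_distribution (Delta b 0) (mu b 0).
Proof. apply (has_distribution_mu 0 dirac0), has_distribution_Delta_0_dirac0. Qed.

Lemma mu_0 d : mu b 0 d = dirac0 d.
Proof. apply mu_of_density, has_distribution_Delta_0_dirac0. Qed.

Lemma has_density_Delta_1_gt d : (1 < d)%Z -> has_density (fun n => Z.eqb (Delta b 1 n) d) 0.
Proof.
  intros Hd. apply (has_density_ext (fun _ => false)); [|apply has_density_const].
  intros n. symmetry. apply Z.eqb_neq. pose proof (Delta_1_le n). lia.
Qed.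

(* Induction on [1 - d]: a carry out of the last digit lowers [Delta b 1] by [b - 1]. *)
Lemma has_distribution_Delta_1 : has_distribution (Delta b 1) (mu b 1).
Proof.
  assert (Hex : forall k d, (1 - d < Z.of_nat k)%Z ->
            exists l, has_density (fun n => Z.eqb (Delta b 1 n) d) l).
  { induction k as [|k IH]; intros d Hd.
    - exists 0. apply has_density_Delta_1_gt; lia.
    - destruct (Z_lt_le_dec 1 d) as [Hd1|Hd1]; [exists 0; apply has_density_Delta_1_gt, Hd1|].
      destruct (IH (d + Z.of_nat (b - 1))%Z) as [l Hl]; [lia|].
      eexists.
      apply (has_density_blocks _ (fun u q => Z.eqb (Delta b ((u + 1) / b) q) (d - Delta_low b 1 u))
        b (fun u => if (u + 1 <? b)%nat then if Z.eqb 0 (d - 1) then 1 else 0 else l)); [lia| |].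
      + intros q u Hu. rewrite Delta_1_mul_add by exact Hu.
        destruct (Z.eqb_spec (Delta b ((u + 1) / b) q + Delta_low b 1 u) d),
          (Z.eqb_spec (Delta b ((u + 1) / b) q) (d - Delta_low b 1 u)); auto; lia.
      + intros u Hu. destruct (Nat.ltb_spec (u + 1) b).
        * rewrite Delta_low_succ_lt, Nat.div_small by lia.
          apply (has_density_ext (fun _ => Z.eqb 0 (d - 1))); [|apply has_density_const].
          intros q; now rewrite Delta_0.
        * replace u with (b - 1)%nat by lia.
          rewrite Delta_low_succ_pred, Nat.sub_add, Nat.div_same by lia.
          revert Hl. apply has_density_ext. intros q. f_equal. lia. }
  intros d. destruct (Hex (S (Z.to_nat (1 - d))) d ltac:(lia)) as [l Hl].
  now rewrite (mu_of_density 1 d l Hl).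
Qed.

Lemma has_distribution_Delta r : has_distribution (Delta b r) (mu b r).
Proof.
  apply (has_distribution_mu r
           (mixture (fun u => mu b ((u + r) / b ^ r)) (Delta_low (b ^ r) r) (b ^ r))).
  apply (has_distribution_blocks _ (fun u => Delta b ((u + r) / b ^ r))); [apply pow_b_pos| |].
  - intros q u Hu. pose proof (Delta_pow_mul_add r 0 r q u Hu) as H.
    rewrite Nat.mul_0_r in H. exact H.
  - intros u Hu. pose proof (lt_pow_b r).
    apply (carry_cases (fun j => has_distribution (Delta b j) (mu b j))); [lia..| |].
    + apply has_distribution_Delta_0.
    + apply has_distribution_Delta_1.
Qed.

Lemma mu_blocks K r1 r0 d :
  mu b (b ^ K * r1 + r0) d
  = mixture (fun u => mu b (r1 + (u + r0) / b ^ K)) (Delta_low (b ^ K) r0) (b ^ K) d.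
Proof.
  apply mu_of_density, (has_distribution_blocks _ (fun u => Delta b (r1 + (u + r0) / b ^ K))).
  - apply pow_b_pos.
  - intros q u Hu. apply Delta_pow_mul_add, Hu.
  - intros u _. apply has_distribution_Delta.
Qed.

Lemma mu_blocks_0 K r0 d :
  mu b r0 d = mixture (fun u => mu b ((u + r0) / b ^ K)) (Delta_low (b ^ K) r0) (b ^ K) d.
Proof. pose proof (mu_blocks K 0 r0 d) as H. rewrite Nat.mul_0_r in H. exact H. Qed.

Lemma mu_bounds r d : 0 <= mu b r d <= 1.
Proof. apply (has_density_bounds _ _ (has_distribution_Delta r d)). Qed.

Lemma mu_1_gt d : (1 < d)%Z -> mu b 1 d = 0.
Proof. intros Hd. apply mu_of_density, has_density_Delta_1_gt, Hd. Qed.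

Lemma mu_1_nonpos d : (d <= 0)%Z -> mu b 1 d = / INR b * mu b 1 (d + Z.of_nat (b - 1))%Z.
Proof.
  intros Hd. rewrite (mu_blocks_0 1), Nat.pow_1_r. unfold mixture.
  rewrite (rsum_pred_last _ b) by lia. rewrite (rsum_ext _ (fun _ => 0)), rsum_const.
  - rewrite Nat.sub_add, Nat.div_same, Delta_low_succ_pred by lia.
    rewrite Rmult_0_r, Rplus_0_l. do 2 f_equal. lia.
  - intros u Hu. rewrite Nat.div_small, mu_0, Delta_low_succ_lt by lia.
    unfold dirac0. destruct (Z.eqb_spec 0 (d - 1)); [lia|reflexivity].
Qed.

Lemma mu_1_tail j : mu b 1 (- Z.of_nat j)%Z <= (1 - / INR b) ^ j.
Proof.
  set (rho := 1 - / INR b).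
  pose proof INR_b_ge_2 as Hb.
  pose proof inv_b_bounds as Hinv.
  assert (Hrho : 0 <= rho <= 1) by (unfold rho; lra).
  assert (Hle1 : forall k, rho ^ k <= 1) by (intros k; rewrite <- (pow1 k); apply pow_incr; lra).
  assert (Hgeom : / INR b <= rho ^ (b - 1)).
  { apply Rle_trans with (1 - INR (b - 1) * / INR b); [|apply bernoulli_ineq; lra].
    rewrite minus_INR by lia. simpl. right. field. lra. }
  induction j as [j IH] using (well_founded_induction lt_wf).
  rewrite mu_1_nonpos by lia.
  destruct (Nat.lt_ge_cases j (b - 1)) as [Hj|Hj].
  - pose proof (mu_bounds 1 (- Z.of_nat j + Z.of_nat (b - 1))).
    replace (b - 1)%nat with (j + (b - 1 - j))%nat in Hgeom by lia.
    rewrite pow_add in Hgeom. pose proof (Hle1 (b - 1 - j)%nat). pose proof (pow_le rho j).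
    apply Rle_trans with (/ INR b); nra.
  - replace (- Z.of_nat j + Z.of_nat (b - 1))%Z with (- Z.of_nat (j - (b - 1)))%Z by lia.
    replace (rho ^ j) with (rho ^ (b - 1) * rho ^ (j - (b - 1)))
      by (rewrite <- pow_add; f_equal; lia).
    pose proof (mu_bounds 1 (- Z.of_nat (j - (b - 1)))).
    pose proof (IH (j - (b - 1))%nat ltac:(lia)). pose proof (pow_le rho (j - (b - 1))).
    apply Rmult_le_compat; lra.
Qed.

Lemma finite_moments_mu_1 : finite_moments (mu b 1).
Proof.
  pose proof inv_b_bounds.
  apply (finite_moments_geom_tail _ (1 - / INR b) 2); [lra| |].
  - intros d Hd. apply mu_1_gt. lia.
  - intros j. split; [apply mu_bounds|apply mu_1_tail].
Qed.

Lemma finite_moments_mu r : finite_moments (mu b r).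
Proof.
  apply (finite_moments_ext _ _ (fun d => eq_sym (mu_blocks_0 r r d))).
  apply finite_moments_mixture. intros u Hu. pose proof (lt_pow_b r).
  apply (carry_cases (fun j => finite_moments (mu b j))); [lia..| |apply finite_moments_mu_1].
  apply (finite_moments_ext _ _ (fun d => eq_sym (mu_0 d))), finite_moments_dirac0.
Qed.

Lemma rsum_Delta_low B r : (0 < B)%nat -> rsum (fun u => IZR (Delta_low B r u)) B = 0.
Proof.
  intros HB. unfold Delta_low.
  rewrite (rsum_ext _ (fun u => INR (digsum b ((u + r) mod B)) + -1 * INR (digsum b u))).
  - rewrite rsum_plus, rsum_scal_l, (rsum_rotate (fun u => INR (digsum b u))) by exact HB. ring.
  - intros u _. rewrite minus_IZR, <- !INR_IZR_INZ. ring.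
Qed.

Lemma mass_mu_blocks K r1 r0 :
  mass (mu b (b ^ K * r1 + r0))
  = / INR (b ^ K) * rsum (fun u => mass (mu b (r1 + (u + r0) / b ^ K))) (b ^ K).
Proof.
  rewrite <- (mass_mixture _ (Delta_low (b ^ K) r0) _ (fun u _ => finite_moments_mu _)).
  apply zsum_ext, mu_blocks.
Qed.

Lemma mass_mu_0 : mass (mu b 0) = 1.
Proof. rewrite <- mass_dirac0. apply zsum_ext, mu_0. Qed.

Lemma mass_mu_1 : mass (mu b 1) = 1.
Proof.
  pose proof INR_b_ge_2 as Hb. pose proof (mass_mu_blocks 1 0 1) as H.
  rewrite Nat.pow_1_r, Nat.mul_0_r, (rsum_pred_last _ b), Nat.sub_add, Nat.div_same in H by lia.
  rewrite (rsum_ext _ (fun _ => 1)), rsum_const, minus_INR in H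
    by (lia || intros u Hu; rewrite Nat.div_small by lia; exact mass_mu_0).
  change (mu b (0 + 1)) with (mu b 1) in H. simpl INR in H.
  set (x := mass (mu b 1)) in *.
  assert (INR b * x = INR b - 1 + x) by (rewrite H at 1; field; lra).
  apply (Rmult_eq_reg_l (INR b - 1)); lra.
Qed.

Lemma mass_mu r : mass (mu b r) = 1.
Proof.
  pose proof (mass_mu_blocks r 0 r) as H. rewrite Nat.mul_0_r in H. change (0 + r)%nat with r in H.
  rewrite H, (rsum_ext _ (fun _ => 1)), rsum_const.
  - field. apply not_0_INR. pose proof (pow_b_pos r). lia.
  - intros u Hu. pose proof (lt_pow_b r).
    apply (carry_cases (fun j => mass (mu b j) = 1)); [lia..|apply mass_mu_0|apply mass_mu_1].
Qed.

(* The translations [Delta_low] sum to zero over the block, so they drop out of the mean. *)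
Lemma mean_mu_blocks K r1 r0 :
  mean (mu b (b ^ K * r1 + r0))
  = / INR (b ^ K) * rsum (fun u => mean (mu b (r1 + (u + r0) / b ^ K))) (b ^ K).
Proof.
  transitivity
    (mean (mixture (fun u => mu b (r1 + (u + r0) / b ^ K)) (Delta_low (b ^ K) r0) (b ^ K))).
  { apply zsum_ext; intros d. now rewrite mu_blocks. }
  rewrite (mean_mixture _ _ _ (fun u _ => finite_moments_mu _)).
  rewrite (rsum_ext _ (fun u => mean (mu b (r1 + (u + r0) / b ^ K)) + IZR (Delta_low (b ^ K) r0 u)))
    by (intros u _; now rewrite mass_mu, Rmult_1_r).
  rewrite rsum_plus, rsum_Delta_low by apply pow_b_pos. ring.
Qed.

Lemma mean_mu_0 : mean (mu b 0) = 0.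
Proof. rewrite <- mean_dirac0. apply zsum_ext; intros d. now rewrite mu_0. Qed.

Lemma mean_mu_1 : mean (mu b 1) = 0.
Proof.
  pose proof INR_b_ge_2 as Hb. pose proof (mean_mu_blocks 1 0 1) as H.
  rewrite Nat.pow_1_r, Nat.mul_0_r, (rsum_pred_last _ b), Nat.sub_add, Nat.div_same in H by lia.
  rewrite (rsum_ext _ (fun _ => 0)), rsum_const in H
    by (intros u Hu; rewrite Nat.div_small by lia; exact mean_mu_0).
  change (mu b (0 + 1)) with (mu b 1) in H.
  set (x := mean (mu b 1)) in *.
  assert (INR b * x = x) by (rewrite H at 1; field; lra).
  apply (Rmult_eq_reg_l (INR b - 1)); lra.
Qed.

Lemma mean_mu r : mean (mu b r) = 0.
Proof.
  pose proof (mean_mu_blocks r 0 r) as H. rewrite Nat.mul_0_r in H. change (0 + r)%nat with r in H.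
  rewrite H, (rsum_ext _ (fun _ => 0)), rsum_const; [ring|].
  intros u Hu. pose proof (lt_pow_b r).
  apply (carry_cases (fun j => mean (mu b j) = 0)); [lia..|apply mean_mu_0|apply mean_mu_1].
Qed.

Lemma moment2_mu_blocks K r1 r0 :
  moment2 (mu b (b ^ K * r1 + r0))
  = / INR (b ^ K) * rsum (fun u => moment2 (mu b (r1 + (u + r0) / b ^ K))
                                   + IZR (Delta_low (b ^ K) r0 u) ^ 2) (b ^ K).
Proof.
  transitivity
    (moment2 (mixture (fun u => mu b (r1 + (u + r0) / b ^ K)) (Delta_low (b ^ K) r0) (b ^ K))).
  { apply zsum_ext; intros d. now rewrite mu_blocks. }
  rewrite (moment2_mixture _ _ _ (fun u _ => finite_moments_mu _)).
  f_equal. apply rsum_ext; intros u _. rewrite mass_mu, mean_mu. ring.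
Qed.

(* Split [u = b q + v] at the lowest digit: [Delta_low] at [b q] is that at [q] plus [b - 1], at
   the other [b - 1] residues it is [-1], and the cross term vanishes by [rsum_Delta_low]. *)
Lemma rsum_sq_Delta_low_pred K :
  rsum (fun u => IZR (Delta_low (b ^ K) (b ^ K - 1) u) ^ 2) (b ^ K) = INR b ^ S K - INR b.
Proof.
  induction K as [|K IH].
  - simpl. unfold Delta_low. rewrite Z.sub_diag. simpl. ring.
  - pose proof (pow_b_pos K) as HB.
    change (rsum ?f (b ^ S K)) with (rsum f (b * b ^ K)). rewrite rsum_mul.
    rewrite (rsum_ext _ (fun q => IZR (Delta_low (b ^ K) (b ^ K - 1) q) ^ 2
        + 2 * INR (b - 1) * IZR (Delta_low (b ^ K) (b ^ K - 1) q) + INR (b - 1) ^ 2 + INR (b - 1))).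
    + rewrite !rsum_plus, rsum_scal_l, rsum_Delta_low, IH, !rsum_const, pow_INR, minus_INR by lia.
      simpl. ring.
    + intros q Hq. cbv beta. rewrite rsum_first by lia.
      rewrite Nat.add_0_r, Delta_low_pred_mul by exact Hq.
      rewrite (rsum_ext _ (fun _ => 1)), rsum_const.
      * rewrite plus_IZR, <- INR_IZR_INZ. ring.
      * intros v Hv. rewrite Delta_low_pred_mul_add by lia. simpl. ring.
Qed.

Lemma moment2_mu_pred_block m rh :
  moment2 (mu b (b ^ m * rh + (b ^ m - 1)))
  = / INR b ^ m * (moment2 (mu b rh) + (INR b ^ m - 1) * moment2 (mu b (rh + 1))
                   + INR b ^ S m - INR b).
Proof.
  pose proof (pow_b_pos m) as HB.
  rewrite moment2_mu_blocks, rsum_plus, rsum_sq_Delta_low_pred, rsum_first by exact HB.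
  rewrite (rsum_ext _ (fun _ => moment2 (mu b (rh + 1)))), rsum_const.
  - rewrite Nat.add_0_l, Nat.div_small, Nat.add_0_r, minus_INR, pow_INR by lia. simpl. ring.
  - intros i Hi. replace ((S i + (b ^ m - 1)) / b ^ m)%nat with 1%nat; [reflexivity|].
    apply (Nat.div_unique _ _ _ i); lia.
Qed.

Lemma Var_mu_moment2 r : Var_mu b r = moment2 (mu b r).
Proof. unfold Var_mu. fold (moment2 (mu b r)) (mean (mu b r)). rewrite mean_mu. ring. Qed.

End FixedBase.

Theorem mainTheorem12 (b rh m : nat) (hb : (2 <= b)%nat) (hm : (1 <= m)%nat) :
  Var_mu b (b ^ m * rh + b ^ m - 1)%nat =
    / INR b ^ m * Var_mu b rh
    + (1 - / INR b ^ m) * Var_mu b (rh + 1)%nat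
    + INR b - / INR b ^ (m - 1).
Proof.
  pose proof (pow_b_pos b hb m).
  replace (b ^ m * rh + b ^ m - 1)%nat with (b ^ m * rh + (b ^ m - 1))%nat by lia.
  rewrite !(Var_mu_moment2 b hb), (moment2_mu_pred_block b hb).
  assert (Hb : INR b <> 0) by (apply not_0_INR; lia).
  destruct m as [|m]; [lia|]. rewrite Nat.sub_succ, Nat.sub_0_r.
  simpl. field. split; [apply pow_nonzero|]; assumption.
Qed.
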